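(* Let $(R,+,0,\times,1,\leq)$ be a partially ordered unitary (nonassociative) ring. For $x \in R$ define $x^{\to 0} = 1$ and $x^{\to n+1} = x\, x^{\to n}$. Suppose that: (1) $1 \geq 0$; (2) $R$ is monotone $\sigma$-complete; (3) every $x \in\, ]0,1]$ has a right-sup-almost-inverse; (4) for every $x \in [0,1[$, $\inf_{n \in \mathbb{N}} x^{\to n}$ exists and equals $0$. Then: (a) for every $x \in [0,1[$, the supremum $\sum_{n\in\mathbb{N}} x^{\to n} := \sup_{n \in \mathbb{N}} \sum_{k=0}^n x^{\to k}$ exists; (b) for every $x \in [0,1[$, $x \sum_{n\in\mathbb{N}} x^{\to n} = \sup_{n\in\mathbb{N}} \sum_{k=0}^{n} x^{\to k+1}$ (and this supremum exists); (c) every $x \in\, ]0,1]$ admits a right inverse, namely $x_R^{-1} = \sum_{n \in \mathbb{N}} (1-x)^{\to n}$, i.e. $x\, x_R^{-1} = 1$; moreover $x_R^{-1} = 1 + a \geq 1$ where $a := \sup_{n}\sum_{k=0}^{n}(1-x)^{\to k+1} \geq 0$.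
   Context: Rings are not assumed associative or commutative: a ring is an abelian group $(R,+,0)$ with a biadditive multiplication; unitary means there is a two-sided multiplicative unit $1$. A partially ordered ring is a ring with a partial order $\leq$ such that $y \geq z \Rightarrow x+y \geq x+z$ and $x \geq 0, y \geq 0 \Rightarrow xy \geq 0$. Write $x < y$ for $x \le y$, $x \ne y$; $]0,1] = \{x : 0 < x \leq 1\}$, $[0,1[ = \{x : 0 \le x < 1\}$. A poset is monotone $\sigma$-complete if every increasing sequence that is bounded above has a supremum. An element $x > 0$ has a right-sup-almost-inverse if there is $y > 0$ with $xy \geq 1$. *)

From mathcomp Require Import all_boot all_order all_algebra.
Set Implicit Arguments. Unset Strict Implicit. Unset Printing Implicit Defensive.
Import GRing.Theory.
Local Open Scope ring_scope.

Section Defs.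
Variables (R : zmodType) (mul : R -> R -> R) (one : R) (le : R -> R -> Prop).

Definition unitary_biadditive : Prop :=
  (forall x y z, mul (x + y) z = mul x z + mul y z) /\
  (forall x y z, mul x (y + z) = mul x y + mul x z) /\
  (forall x, mul one x = x) /\ (forall x, mul x one = x).

Definition partial_order : Prop :=
  (forall x, le x x) /\
  (forall x y, le x y -> le y x -> x = y) /\
  (forall x y z, le x y -> le y z -> le x z).

Definition po_unitary_ring : Prop :=
  unitary_biadditive /\ partial_order /\
  (forall x y z, le z y -> le (x + z) (x + y)) /\
  (forall x y, le 0 x -> le 0 y -> le 0 (mul x y)).

Definition lt (x y : R) : Prop := le x y /\ x <> y.

Fixpoint rpow (x : R) (n : nat) : R :=
  match n with O => one | S m => mul x (rpow x m) end.

Definition is_sup_seq (u : nat -> R) (s : R) : Prop :=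
  (forall n, le (u n) s) /\ (forall b, (forall n, le (u n) b) -> le s b).

Definition is_inf_seq (u : nat -> R) (s : R) : Prop :=
  (forall n, le s (u n)) /\ (forall b, (forall n, le b (u n)) -> le b s).

Definition monotone_sigma_complete : Prop :=
  forall u : nat -> R, (forall n, le (u n) (u n.+1)) ->
    (exists b, forall n, le (u n) b) -> exists s, is_sup_seq u s.

Definition has_right_sup_almost_inverse (x : R) : Prop :=
  exists y, lt 0 y /\ le one (mul x y).

Definition psum (x : R) (n : nat) : R := \sum_(k < n.+1) rpow x k.
Definition psum1 (x : R) (n : nat) : R := \sum_(k < n.+1) rpow x k.+1.

End Defs.

(* Write u = 1 - x and S_n = sum_{k<=n} x^{->k}.  Telescoping gives u S_n = 1 - x^{->n+1}, so if
   s = sup S_n then 1 - u s is a lower bound of all powers x^{->n} (for n = 0 use x <= 1), hence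
   u s >= 1 since their infimum is 0.  Conversely S_{n+1} = 1 + x S_n gives s <= 1 + x s, i.e.
   u s <= 1.  So u s = 1, x s = s - 1, and s - 1 is the supremum of the shifted sums S_{n+1} - 1.
   For existence, y > 0 with u y >= 1, i.e. 1 + x y <= y, satisfies S_n + x(x(...(x y))) <= y by
   induction, so the increasing S_n are bounded.  Part (c) applies all this to 1 - x. *)
From mathcomp Require Import all_boot all_order all_algebra.
Import GRing.Theory.
Set Implicit Arguments. Unset Strict Implicit.
Local Open Scope ring_scope.

Section PartiallyOrderedRing.
Variables (R : zmodType) (mul : R -> R -> R) (one : R) (le : R -> R -> Prop).

Local Notation pow := (rpow mul one).
Local Notation ps := (psum mul one).
Local Notation ps1 := (psum1 mul one).

Hypothesis po_ring : po_unitary_ring mul one le.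

Let mulDx : forall x y z, mul (x + y) z = mul x z + mul y z := proj1 (proj1 po_ring).
Let mulxD : forall x y z, mul x (y + z) = mul x y + mul x z :=
  proj1 (proj2 (proj1 po_ring)).
Let mul1x : forall x, mul one x = x := proj1 (proj2 (proj2 (proj1 po_ring))).
Let mulx1 : forall x, mul x one = x := proj2 (proj2 (proj2 (proj1 po_ring))).
Let le_refl : forall x, le x x := proj1 (proj1 (proj2 po_ring)).
Let le_anti : forall x y, le x y -> le y x -> x = y :=
  proj1 (proj2 (proj1 (proj2 po_ring))).
Let le_trans : forall {x y z}, le x y -> le y z -> le x z :=
  proj2 (proj2 (proj1 (proj2 po_ring))).
Let leD2l : forall x {y z}, le z y -> le (x + z) (x + y) :=
  proj1 (proj2 (proj2 po_ring)).
Let mul_ge0 : forall {x y}, le 0 x -> le 0 y -> le 0 (mul x y) :=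
  proj2 (proj2 (proj2 po_ring)).

Lemma mul0x y : mul 0 y = 0.
Proof. by apply: (addrI (mul 0 y)); rewrite -mulDx !addr0. Qed.

Lemma mulx0 y : mul y 0 = 0.
Proof. by apply: (addrI (mul y 0)); rewrite -mulxD !addr0. Qed.

Lemma mulBx a b y : mul (a - b) y = mul a y - mul b y.
Proof.
rewrite mulDx; congr (_ + _); apply: (addrI (mul b y)).
by rewrite -mulDx !subrr mul0x.
Qed.

Lemma mulxB y a b : mul y (a - b) = mul y a - mul y b.
Proof.
rewrite mulxD; congr (_ + _); apply: (addrI (mul y b)).
by rewrite -mulxD !subrr mulx0.
Qed.

Lemma psum0 x : ps x 0 = one.
Proof. by rewrite /psum big_ord_recl big_ord0 addr0. Qed.

Lemma psumSr x n : ps x n.+1 = ps x n + pow x n.+1.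
Proof. by rewrite /psum big_ord_recr. Qed.

Lemma psumSl x n : ps x n.+1 = one + ps1 x n.
Proof. by rewrite /psum /psum1 big_ord_recl. Qed.

Lemma mul_psum x n : mul x (ps x n) = ps1 x n.
Proof. exact: (big_morph (mul x) (mulxD x) (mulx0 x)). Qed.

Lemma mul_subr_psum x n : mul (one - x) (ps x n) = one - pow x n.+1.
Proof.
rewrite mulBx mul1x mul_psum; apply/eqP.
by rewrite subr_eq addrAC -psumSl psumSr addrK.
Qed.

Lemma le_subP a b : le a b <-> le 0 (b - a).
Proof.
split=> h; first by have := leD2l (- a) h; rewrite addNr addrC.
by have := leD2l a h; rewrite addr0 addrC subrK.
Qed.

Lemma lt_subP a b : lt le a b <-> lt le 0 (b - a).
Proof.
split=> -[hab neq]; split; try exact/(le_subP a b).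
  by move=> /esym/subr0_eq/esym.
by move=> eab; apply: neq; rewrite eab subrr.
Qed.

Lemma le_of_sub_eq a b c d : b - a = d - c -> le a b -> le c d.
Proof. by move=> e /(le_subP a b); rewrite e => /(le_subP c d). Qed.

Lemma leD a b c d : le a b -> le c d -> le (a + c) (b + d).
Proof.
move=> hab hcd; apply: (le_trans (leD2l a hcd)).
by have := leD2l d hab; rewrite (addrC d a) (addrC d b).
Qed.

Lemma le_subCr c a b : le (c - a) b -> le (c - b) a.
Proof. by apply: le_of_sub_eq; rewrite !opprB !addrA (addrC a). Qed.

Lemma le_mul2l {x a b} : le 0 x -> le a b -> le (mul x a) (mul x b).
Proof. by move=> hx /le_subP hab; apply/le_subP; rewrite -mulxB; apply: mul_ge0. Qed.

Hypothesis le01 : le 0 one.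

Lemma rpow_ge0 x n : le 0 x -> le 0 (pow x n).
Proof. by move=> hx; elim: n => [|n IH] /=; [exact: le01 | apply: mul_ge0]. Qed.

Lemma psum_nondecr {x} n : le 0 x -> le (ps x n) (ps x n.+1).
Proof. by move=> hx; apply/le_subP; rewrite psumSr addrAC subrr add0r; apply: rpow_ge0. Qed.

Lemma psum_le_almost_inverse x y :
  le 0 x -> le 0 y -> le one (mul (one - x) y) -> forall n, le (ps x n) y.
Proof.
move=> hx hy hxy.
have base : le (one + mul x y) y.
  by move: hxy; apply: le_of_sub_eq; rewrite mulBx mul1x opprD addrA addrAC.
have bound n : le (ps x n + iter n.+1 (mul x) y) y.
  elim: n => [|n IH]; first by rewrite psum0.
  apply: le_trans base; rewrite psumSl -addrA; apply: leD (le_refl _) _.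
  by have := le_mul2l hx IH; rewrite mulxD mul_psum.
have iter_ge0 n : le 0 (iter n (mul x) y) by elim: n => [|n IH] //=; apply: mul_ge0.
move=> n; apply: le_trans (bound n).
by have := leD2l (ps x n) (iter_ge0 n.+1); rewrite addr0.
Qed.

Section GeometricSeries.
Variables (x s : R).
Hypothesis x_ge0 : le 0 x.
Hypothesis x_le1 : le x one.
Hypothesis pow_inf0 : is_inf_seq le (pow x) 0.
Hypothesis s_sup : is_sup_seq le (ps x) s.

Lemma le_psum_sup n : le (ps x n) s.
Proof. exact: s_sup.1. Qed.

Lemma one_le_sup : le one s.
Proof. by rewrite -(psum0 x); apply: le_psum_sup. Qed.

Lemma one_le_mul_subr_sup : le one (mul (one - x) s).
Proof.
have sub_ge0 : le 0 (one - x) by apply/(le_subP x one).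
have lb_pow n : le (one - mul (one - x) s) (pow x n.+1).
  by apply: le_subCr; rewrite -mul_subr_psum; apply: le_mul2l; last exact: le_psum_sup.
have lb n : le (one - mul (one - x) s) (pow x n).
  case: n => [|n]; last exact: lb_pow.
  by apply: le_trans x_le1; have := lb_pow 0%N; rewrite /= mulx1.
by have := pow_inf0.2 _ lb; apply: le_of_sub_eq; rewrite sub0r opprB.
Qed.

Lemma sup_le_add_mul : le s (one + mul x s).
Proof.
apply: s_sup.2 => -[|n].
  rewrite psum0; have := leD2l one (mul_ge0 x_ge0 (le_trans le01 one_le_sup)).
  by rewrite addr0.
by rewrite psumSl -mul_psum; apply: leD2l; apply: le_mul2l x_ge0 (le_psum_sup n).
Qed.

Lemma mul_subr_sup : mul (one - x) s = one.
Proof.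
apply: le_anti one_le_mul_subr_sup; move: sup_le_add_mul; apply: le_of_sub_eq.
by rewrite mulBx mul1x opprB addrA.
Qed.

Lemma mul_sup : mul x s = s - one.
Proof. by rewrite -mul_subr_sup mulBx mul1x opprB addrC subrK. Qed.

Lemma sup_psum1 : is_sup_seq le (ps1 x) (s - one).
Proof.
split=> [n | b ub].
  by have := le_psum_sup n.+1; apply: le_of_sub_eq; rewrite psumSl opprD addrA.
have : le s (one + b).
  apply: s_sup.2 => -[|n]; last by rewrite psumSl; apply: leD2l.
  apply: le_trans (psum_nondecr 0%N x_ge0) _.
  by rewrite psumSl; apply: leD2l.
by apply: le_of_sub_eq; rewrite opprB addrA (addrC b).
Qed.

End GeometricSeries.

Lemma exists_sup_psum x :
  monotone_sigma_complete le -> le 0 x ->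
  has_right_sup_almost_inverse mul one le (one - x) ->
  exists s, is_sup_seq le (ps x) s.
Proof.
move=> sigma hx [y [[y_ge0 _] hy]]; apply: sigma => [n|].
  exact: psum_nondecr.
by exists y; apply: psum_le_almost_inverse.
Qed.

End PartiallyOrderedRing.

Theorem mainTheorem11 (R : zmodType) (mul : R -> R -> R) (one : R)
    (le : R -> R -> Prop) :
  po_unitary_ring mul one le ->
  le 0 one ->
  monotone_sigma_complete le ->
  (forall x, lt le 0 x -> le x one ->
     has_right_sup_almost_inverse mul one le x) ->
  (forall x, le 0 x -> lt le x one -> is_inf_seq le (rpow mul one x) 0) ->
  (forall x, le 0 x -> lt le x one ->
     exists s, is_sup_seq le (psum mul one x) s) /\
  (forall x, le 0 x -> lt le x one -> forall s,
     is_sup_seq le (psum mul one x) s ->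
     is_sup_seq le (psum1 mul one x) (mul x s)) /\
  (forall x, lt le 0 x -> le x one -> forall s,
     is_sup_seq le (psum mul one (one - x)) s ->
     mul x s = one /\
     exists a, is_sup_seq le (psum1 mul one (one - x)) a /\
       le 0 a /\ s = one + a /\ le one s).
Proof.
move=> po le01 sigma almost_inv pow_inf0.
have compl_le1 x : le 0 x -> le (one - x) one.
  by move=> ?; apply/(le_subP po (one - x) one); rewrite subKr.
have compl_lt1 x : lt le 0 x -> lt le (one - x) one.
  by move=> ?; apply/(lt_subP po (one - x) one); rewrite subKr.
split; [|split].
- move=> x x_ge0 x_lt1; apply: (exists_sup_psum po le01 sigma x_ge0).
  by apply: almost_inv; [apply/(lt_subP po x one) | apply: compl_le1].
- move=> x x_ge0 x_lt1 s s_sup.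
  have x_le1 := proj1 x_lt1.
  rewrite (mul_sup po le01 x_ge0 x_le1 (pow_inf0 x x_ge0 x_lt1) s_sup).
  exact: (sup_psum1 po le01 x_ge0 s_sup).
move=> x x_gt0 x_le1 s s_sup.
have u_ge0 : le 0 (one - x) by apply/(le_subP po x one).
have u_lt1 := compl_lt1 x x_gt0.
have u_inf0 := pow_inf0 _ u_ge0 u_lt1.
have := mul_subr_sup po le01 u_ge0 (proj1 u_lt1) u_inf0 s_sup.
rewrite subKr => x_s; split=> //.
have one_le_s := one_le_sup s_sup.
exists (s - one); split; first exact: (sup_psum1 po le01 u_ge0 s_sup).
by split; [apply/(le_subP po one s) | rewrite addrC subrK].
Qed.
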